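(* Let $\mathcal{L}$ and $\mathcal{S}$ be ordered topological vector spaces over $\mathbb{R}$ with positive cones $\mathcal{L}_+$ and $\mathcal{S}_+$, and assume $\mathcal{S}$ is a dense subspace of $\mathcal{L}$. Let $\mathcal{A}\subset\mathcal{S}$ be a convex acceptance set (in $\mathcal{S}$) which is closed for the weak topology $\sigma(\mathcal{S},\mathcal{L}')$, and let $S=(S_0,S_T)$ be a traded asset with $S_T\in\mathcal{S}_+$. Assume $\rho_{\mathcal{A},S}:\mathcal{S}\to\overline{\mathbb{R}}$ is finite-valued and continuous on $\mathcal{S}$. Then the following statements are equivalent: (a) $\rho_{\mathcal{A},S}$ can be extended to a finite-valued, continuous risk measure on $\mathcal{L}$ (i.e. there is a finite-valued continuous risk measure on $\mathcal{L}$ whose restriction to $\mathcal{S}$ equals $\rho_{\mathcal{A},S}$); (b) $\rho_{\mathcal{A},S}$ is continuous at $0$ with respect to the $\mathcal{L}$-topology on $\mathcal{S}$; (c) $\mathcal{A}$ has nonempty interior with respect to the $\mathcal{L}$-topology on $\mathcal{S}$; (d) $\mathrm{Cl}_{\mathcal{L}}(\mathcal{A})$ has nonempty interior in $\mathcal{L}$. In this case, the extension is unique and is given by $\rho_{\mathrm{Cl}_{\mathcal{L}}(\mathcal{A}),S}:\mathcal{L}\to\overline{\mathbb{R}}$.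
   Context: For an ordered topological vector space $\mathcal{X}$ with positive cone $\mathcal{X}_+$, an acceptance set is a nonempty proper subset $\mathcal{A}\subset\mathcal{X}$ with $\mathcal{A}+\mathcal{X}_+\subset\mathcal{A}$. A traded asset is a pair $S=(S_0,S_T)$ with $S_0>0$ and $S_T\in\mathcal{X}_+$ nonzero. The risk measure associated to $\mathcal{A}$ and $S$ is $\rho_{\mathcal{A},S}:\mathcal{X}\to\overline{\mathbb{R}}$, $\rho_{\mathcal{A},S}(X)=\inf\{m\in\mathbb{R}: X+\frac{m}{S_0}S_T\in\mathcal{A}\}$; the same formula defines $\rho_{\mathcal{B},S}$ on $\mathcal{L}$ for $\mathcal{B}\subset\mathcal{L}$. $\mathcal{L}'$ is the topological dual of $\mathcal{L}$; $\sigma(\mathcal{S},\mathcal{L}')$ is the weak topology on $\mathcal{S}$ induced by restrictions of elements of $\mathcal{L}'$. The $\mathcal{L}$-topology on $\mathcal{S}$ is the relative topology induced by $\mathcal{L}$, and $\mathrm{Cl}_{\mathcal{L}}(\mathcal{A})$ is the closure of $\mathcal{A}$ in $\mathcal{L}$. *)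

From HB Require Import structures.
From mathcomp Require Import all_boot all_order all_algebra.
From mathcomp Require Import all_classical all_reals.
From mathcomp Require Import topology normedtype tvs convex ereal.
From mathcomp Require Import function_spaces initial_topology.

Set Implicit Arguments.
Unset Strict Implicit.
Unset Printing Implicit Defensive.

Import Order.TTheory GRing.Theory Num.Theory.
Local Open Scope classical_set_scope.
Local Open Scope ring_scope.

Definition positive_cone (R : realType) (V : lmodType R) (P : set V) : Prop :=
  [/\ P 0,
      (forall x y, P x -> P y -> P (x + y)),
      (forall (t : R) x, 0 <= t -> P x -> P (t *: x))
    & (forall x, P x -> P (- x) -> x = 0)].

Definition acceptance_set (R : realType) (V : lmodType R) (P : set V)
    (A : set V) : Prop :=
  [/\ A !=set0, A != setT & (forall a p, A a -> P p -> A (a + p))].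

Definition traded_asset (R : realType) (V : lmodType R) (P : set V)
    (S0 : R) (ST : V) : Prop :=
  0 < S0 /\ P ST /\ ST != 0.

(** rho_{A,S}(X) = inf { m in R : X + (m/S0) ST in A }  (inf of empty = +oo). *)
Definition rho (R : realType) (V : lmodType R) (A : set V) (S0 : R) (ST : V)
    (X : V) : \bar R :=
  ereal_inf [set m%:E | m in [set m : R | A (X + (m / S0) *: ST)]].

Definition finite_valued (T : Type) (R : realType) (f : T -> \bar R) : Prop :=
  forall x, f x \is a fin_num.

Definition tdual (R : realType) (L : topologicalLmodType R) : Type :=
  {f : {linear L -> R^o} | continuous f}.

(** The map S -> (L' -> R), s |-> (phi |-> phi (iota s)); the initial topology
    it induces from the pointwise (product) topology is sigma(S, L'). *)
Definition dual_pairing (R : realType) (L : topologicalLmodType R) (S : Type)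
    (iota : S -> L) (s : S) : {ptws tdual L -> R^o} :=
  fun phi => (sval phi : L -> R^o) (iota s).

Definition sigma_closed (R : realType) (L : topologicalLmodType R)
    (S : choiceType) (iota : S -> L) (A : set S) : Prop :=
  @closed (initial_topology (dual_pairing iota)) A.

From HB Require Import structures.
From mathcomp Require Import all_boot all_order all_algebra.
From mathcomp Require Import all_classical all_reals.
From mathcomp Require Import topology normedtype tvs convex ereal.
From mathcomp Require Import function_spaces initial_topology.
From mathcomp Require Import ring lra.
Import Order.TTheory GRing.Theory Num.Theory.
Local Open Scope classical_set_scope.
Local Open Scope ring_scope.

(* Let K be the L-closure of iota(A). As sigma(S,L') is coarser than the
   L-topology, the sigma(S,L')-closed set A equals iota^-1(K), so rho_K extends
   rho_A. The chain (a) -> (b) -> (c) -> (d) is by restriction, by translating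
   into A a neighbourhood of 0 on which rho_A < rho_A(0) + 1, and by density of
   S. For (d) -> (a): K is closed, convex and stable under adding positive
   multiples of S_T. Reflecting the interior of K through any x and meeting the
   reflection with S yields an interior point of K on the line x + R S_T and a
   lower bound for K on that line, so rho_K is finite; it is lower
   semicontinuous as K is closed, and upper semicontinuous as convexity pushes
   every level above rho_K(x) into the interior of K. Continuous extensions are
   unique since S is dense. *)

Definition ray_stable {R : realType} {V : lmodType R} (v : V) (K : set V) :=
  forall x (t : R), 0 <= t -> K x -> K (x + t *: v).

Section lmodule_sets.
Context {R : realType} {V : lmodType R}.

Lemma convex_setP (C : set V) :
  convex_set (C : set (convex_lmodType V)) <->
  (forall a b (t : R), 0 <= t <= 1 -> C a -> C b -> C (t *: a + (1 - t) *: b)).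
Proof.
split=> [cC a b t /andP[t0 t1] Ca Cb | cC a b l].
  by have := cC a b (Itv01 t0 t1) (mem_set Ca) (mem_set Cb); rewrite inE.
rewrite !inE => Ca Cb; apply: (cC a b l%:num) => //.
by apply/andP; split; [exact: ge0 | exact: le1].
Qed.

Lemma line_comb (x v : V) (p q t : R) :
  t *: (x + p *: v) + (1 - t) *: (x + q *: v) = x + (t * p + (1 - t) * q) *: v.
Proof. by rewrite !scalerDr !scalerA addrACA -scalerDl subrKC scale1r scalerDl. Qed.

Lemma acceptance_ray_stable (P A : set V) (v : V) :
  (forall (t : R) x, 0 <= t -> P x -> P (t *: x)) ->
  acceptance_set P A -> P v -> ray_stable v A.
Proof. by move=> P_scale [_ _ AP] Pv x t t0 Ax; apply: AP Ax (P_scale _ _ t0 Pv). Qed.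

Lemma ray_stable_level {K : set V} {S0 : R} {v : V} {X m m'} :
  0 < S0 -> ray_stable v K ->
  K (X + (m / S0) *: v) -> m <= m' -> K (X + (m' / S0) *: v).
Proof.
move=> S0_gt0 rK Km mm'.
have -> : m' / S0 = m / S0 + (m' - m) / S0 by rewrite -mulrDl subrKC.
rewrite scalerDl addrA; apply: (rK _ _ _ Km).
by rewrite divr_ge0 ?subr_ge0 // ltW.
Qed.

End lmodule_sets.

Section linear_images.
Context {R : realType} {V W : lmodType R} (f : {linear V -> W}).

Lemma image_ray_stable {v : V} {A : set V} :
  ray_stable v A -> ray_stable (f v) (f @` A).
Proof.
move=> rA _ t t0 [a Aa <-]; exists (a + t *: v); first exact: rA.
by rewrite linearD linearZ.
Qed.

Lemma image_convex {A : set V} : convex_set (A : set (convex_lmodType V)) ->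
  convex_set (f @` A : set (convex_lmodType W)).
Proof.
move=> /convex_setP cA; apply/convex_setP => _ _ t t01 [a Aa <-] [b Ab <-].
by exists (t *: a + (1 - t) *: b); [exact: cA | rewrite linearD !linearZ].
Qed.

End linear_images.

Section risk_measure.
Context {R : realType} {V : lmodType R} (K : set V) (S0 : R) (v : V).
Local Notation rhoK := (rho K S0 v).

Lemma rho_le X m : K (X + (m / S0) *: v) -> (rhoK X <= m%:E)%E.
Proof. by move=> KXm; apply: ge_ereal_inf; exists m%:E => //; exists m. Qed.

Lemma rho_lt X (c : \bar R) : (rhoK X < c)%E ->
  exists2 m : R, K (X + (m / S0) *: v) & (m%:E < c)%E.
Proof. by move=> /ereal_inf_lt [_ [m Km <-]] mc; exists m. Qed.

Lemma rho_ge X r : (forall m, K (X + (m / S0) *: v) -> r <= m) ->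
  (r%:E <= rhoK X)%E.
Proof. by move=> lb; apply/ereal_infP => _ [m Km <-]; rewrite lee_fin; exact: lb. Qed.

End risk_measure.

Lemma rho_preimage {R : realType} {V W : lmodType R} (f : {linear V -> W})
    (K : set W) (S0 : R) (v X : V) :
  rho (f @^-1` K) S0 v X = rho K S0 (f v) (f X).
Proof.
rewrite /rho; congr (ereal_inf (_ @` _)); apply/funext => m /=.
by rewrite linearD linearZ.
Qed.

Section topological_lmodule.
Context {R : realType} {L : topologicalLmodType R}.

Lemma scale_add_continuous (t : R) (w : L) : continuous (fun y : L => t *: y + w).
Proof.
have scale_t : continuous (fun y : L => t *: y).
  move=> y; apply: (@continuous_comp L (R^o * L)%type L (fun y => (t : R^o, y))
    (fun z => z.1 *: z.2)); last exact: scale_continuous.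
  exact: (@cvg_pair _ _ _ _ (nbhs (t : R^o))) (cvg_cst _) cvg_id.
move=> x; apply: (@continuous_comp L (L * L)%type L (fun y => (t *: y, w))
  (fun z => z.1 + z.2)); last exact: add_continuous.
exact: (@cvg_pair _ _ _ _ (nbhs (t *: x)) (nbhs w)) (scale_t x) (cvg_cst _).
Qed.

Lemma nbhs_scale_add (t : R) (w x : L) (N : set L) :
  nbhs (t *: x + w) N -> nbhs x [set y | N (t *: y + w)].
Proof. exact: (scale_add_continuous t w x). Qed.

Lemma open_scale_add (t : R) (w : L) (O : set L) :
  open O -> open [set y | O (t *: y + w)].
Proof. exact: (continuousP _).1 (scale_add_continuous t w) O. Qed.

Lemma nbhs_addr (w x : L) (N : set L) :
  nbhs (x + w) N -> nbhs x [set y | N (y + w)].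
Proof.
rewrite -[x in nbhs (x + _)]scale1r => /nbhs_scale_add.
by apply: filterS => y; rewrite /= scale1r.
Qed.

Lemma closure_ray_stable {v : L} {K : set L} :
  ray_stable v K -> ray_stable v (closure K).
Proof.
move=> rK x t t0 Kx N /nbhs_addr /Kx [y [Ky Ny]].
by exists (y + t *: v); split; [exact: rK | ].
Qed.

Lemma interior_ray_stable {v : L} {K : set L} :
  ray_stable v K -> ray_stable v K°.
Proof.
move=> rK x t t0 Kx; have /nbhs_addr : nbhs (x + t *: v - t *: v) K by rewrite addrK.
by apply: filterS => y /= /(rK _ _ t0); rewrite subrK.
Qed.

Lemma closure_convex {C : set L} : convex_set (C : set (convex_lmodType L)) ->
  convex_set (closure C : set (convex_lmodType L)).
Proof.
move=> /convex_setP cC; apply/convex_setP.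
have mixed a b t : 0 <= t <= 1 -> C a -> closure C b ->
    closure C (t *: a + (1 - t) *: b).
  move=> t01 Ca Cb N; rewrite addrC => /nbhs_scale_add /Cb [y [Cy Ny]].
  by exists (t *: a + (1 - t) *: y); split; [exact: cC | rewrite addrC].
move=> a b t t01 Ca Cb N /nbhs_interior /nbhs_scale_add /Ca [y [Cy Ny]].
have N_nbhs : nbhs (t *: y + (1 - t) *: b) N°.
  exact: open_nbhs_nbhs (conj (@open_interior _ N) Ny).
have [z [Cz Nz]] := mixed y b t t01 Cy Cb _ N_nbhs.
by exists z; split => //; exact: interior_subset.
Qed.

Lemma convex_interior_comb {C : set L} {a b : L} {t : R} :
  convex_set (C : set (convex_lmodType L)) -> 0 < t <= 1 ->
  C a -> C° b -> C° (t *: b + (1 - t) *: a).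
Proof.
move=> /convex_setP cC /andP[t0 t1] Ca Cb.
have tN0 : t != 0 by rewrite gt_eqF.
pose w := - (t^-1 * (1 - t)) *: a.
have to_b : t^-1 *: (t *: b + (1 - t) *: a) + w = b.
  by rewrite scalerDr !scalerA mulVf // scale1r /w scaleNr addrK.
have back y : t *: (t^-1 *: y + w) + (1 - t) *: a = y.
  rewrite scalerDr scalerA divff // scale1r /w scalerA mulrN mulrA divff //.
  by rewrite mul1r scaleNr subrK.
move: Cb; rewrite -{1}to_b => /nbhs_scale_add; apply: filterS => y /= Cy.
by rewrite -(back y); apply: cC => //; rewrite ltW.
Qed.

End topological_lmodule.

Lemma continuous_eq_dense {T U : topologicalType} {D : set T} {f g : T -> U} :
  hausdorff_space U -> dense D -> continuous f -> continuous g ->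
  (forall y, D y -> f y = g y) -> f = g.
Proof.
move=> hU dD cf cg fg; apply/funext => x; apply: hU => P Q Pfx Qgx.
have fgPQ : nbhs x (f @^-1` P `&` g @^-1` Q) by apply: filterI; [exact: cf | exact: cg].
have [y [/interior_subset [Py Qy] Dy]] := dD _ (ex_intro _ x fgPQ) (@open_interior _ _).
by exists (f y); split; rewrite // fg.
Qed.

Lemma continuous_at_bounds {R : realType} {T : topologicalType}
    (f : T -> \bar R) (x : T) : f x \is a fin_num ->
  (forall c, (f x < c%:E)%E -> \forall y \near x, (f y <= c%:E)%E) ->
  (forall c, (c%:E < f x)%E -> \forall y \near x, (c%:E <= f y)%E) ->
  f @ x --> f x.
Proof.
move=> fx_fin upper lower; rewrite -(fineK fx_fin); set r := fine (f x).
have band e : 0 < e ->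
    \forall y \near x, ((r - e)%:E <= f y)%E /\ (f y <= (r + e)%:E)%E.
  move=> e0; apply: filterI; [apply: lower | apply: upper];
    by rewrite -(fineK fx_fin) lte_fin -/r; lra.
apply: cvg_EFin.
  apply: filterS (band 1 ltr01) => y [ly uy].
  by rewrite fin_numElt (lt_le_trans (ltNyr _) ly) (le_lt_trans uy (ltry _)).
apply/(@cvgrPdist_le _ R^o) => e e0; apply: filterS (band e e0) => y.
rewrite /=; case: (f y) => [s||] /= [ly uy]; last by rewrite leeNy_eq in ly.
  by rewrite !lee_fin in ly uy; rewrite ler_norml; apply/andP; split; lra.
by rewrite leye_eq in uy.
Qed.

Section rho_closed_convex.
Context {R : realType} {L : topologicalLmodType R} {K : set L} {S0 : R} {v : L}.
Hypotheses (S0_gt0 : 0 < S0) (K_ray : ray_stable v K)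
  (K_convex : convex_set (K : set (convex_lmodType L))).
Local Notation rhoK := (rho K S0 v).

Lemma rho_ge_near (x : L) (c : R) : closed K -> (c%:E < rhoK x)%E ->
  \forall y \near x, (c%:E <= rhoK y)%E.
Proof.
move=> K_closed cx.
have notKc : (~` K) (x + (c / S0) *: v) by move=> /rho_le; rewrite leNgt cx.
have /nbhs_addr : nbhs (x + (c / S0) *: v) (~` K).
  by apply: open_nbhs_nbhs; split; rewrite ?openC.
apply: filterS => y /= notKy; apply: rho_ge => m Km; rewrite leNgt.
by apply/negP => mc; apply/notKy/(ray_stable_level S0_gt0 K_ray Km)/ltW.
Qed.

Lemma rho_lt_interior {x : L} {c M : R} : K° (x + (M / S0) *: v) ->
  (rhoK x < c%:E)%E -> K° (x + (c / S0) *: v).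
Proof.
move=> KM /rho_lt [m Km]; rewrite lte_fin => mc.
pose M' := Num.max M c.
have KM' : K° (x + (M' / S0) *: v).
  apply: (ray_stable_level S0_gt0 (interior_ray_stable K_ray) KM).
  by rewrite le_max lexx.
have cM' : c <= M' by rewrite le_max lexx orbT.
pose t := (c - m) / (M' - m).
have t01 : 0 < t <= 1.
  apply/andP; split; first by rewrite divr_gt0 // subr_gt0 //; lra.
  by rewrite ler_pdivrMr ?subr_gt0; lra.
have := convex_interior_comb K_convex t01 Km KM'; rewrite line_comb.
suff -> : t * (M' / S0) + (1 - t) * (m / S0) = c / S0 by [].
by rewrite /t; field; rewrite !gt_eqF // subr_gt0; lra.
Qed.

Lemma rho_le_near {x : L} {c M : R} : K° (x + (M / S0) *: v) ->
  (rhoK x < c%:E)%E -> \forall y \near x, (rhoK y <= c%:E)%E.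
Proof.
move=> KM /(rho_lt_interior KM) /nbhs_addr.
by apply: filterS => y /=; exact: rho_le.
Qed.

Context {D : set L}.
Hypotheses (D_dense : dense D) (rho_fin_D : forall d, D d -> rhoK d \is a fin_num)
  (K_interior : K° !=set0).

(* The midpoint of [2x - d] (interior) and [d + m/S0 v] (in K) is [x + m/(2 S0) v]. *)
Lemma interior_meets_line (x : L) : exists M, K° (x + (M / S0) *: v).
Proof.
have [y0 Ky0] := K_interior.
have [d [Kd Dd]] : [set y | K° ((-1) *: y + 2 *: x)] `&` D !=set0.
  apply: D_dense; last exact/open_scale_add/open_interior.
  by exists (2 *: x - y0); rewrite /= scaleN1r opprB subrK.
have [m Km _] : exists2 m : R, K (d + (m / S0) *: v) & (m%:E < +oo)%E.
  by apply: rho_lt; rewrite ltey_eq rho_fin_D.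
exists (2^-1 * m).
have half01 : 0 < (2^-1 : R) <= 1 by rewrite invr_gt0 invf_le1 ?ltr0n ?ler1n.
have := convex_interior_comb K_convex half01 Km Kd.
have -> : 1 - 2^-1 = 2^-1 :> R by field.
rewrite -scalerDr addrACA scaleN1r addNr add0r scalerDr !scalerA mulVf ?pnatr_eq0 //.
by rewrite scale1r mulrA.
Qed.

(* Symmetrically, the midpoint of [2d - x] and [x + m/S0 v] is [d + m/(2 S0) v],
   so [m] is at least [2 rho_K(d)]. *)
Lemma line_mem_lbound (x : L) : exists M, forall m, K (x + (m / S0) *: v) -> M <= m.
Proof.
have [y0 Ky0] := K_interior.
have [d [Kd Dd]] : [set y | K° (2 *: y + (-1) *: x)] `&` D !=set0.
  apply: D_dense; last exact/open_scale_add/open_interior.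
  exists (2^-1 *: (x + y0)); rewrite /= scalerA mulfV ?pnatr_eq0 // scale1r.
  by rewrite scaleN1r addrC addKr.
exists (2 * fine (rhoK d)) => m Km.
have half01 : 0 <= (2^-1 : R) <= 1 by rewrite invr_ge0 invf_le1 ?ler0n ?ltr0n ?ler1n.
have := (convex_setP K).1 K_convex _ _ _ half01 (interior_subset Kd) Km.
have -> : 1 - 2^-1 = 2^-1 :> R by field.
rewrite -scalerDr scaleN1r addrA subrK scalerDr !scalerA mulVf ?pnatr_eq0 //.
rewrite scale1r mulrA => /rho_le.
rewrite -(fineK (rho_fin_D _ Dd)) lee_fin; lra.
Qed.

Lemma rho_fin_num : finite_valued rhoK.
Proof.
rewrite /finite_valued => x.
have [M KM] := interior_meets_line x; have [M' lb] := line_mem_lbound x.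
have upper : (rhoK x <= M%:E)%E by apply: rho_le; exact: interior_subset.
have lower : (M'%:E <= rhoK x)%E by apply: rho_ge.
by rewrite fin_numElt (lt_le_trans (ltNyr _) lower) (le_lt_trans upper (ltry _)).
Qed.

Lemma rho_continuous : closed K -> continuous rhoK.
Proof.
move=> K_closed x; apply: continuous_at_bounds (rho_fin_num x) _ _ => c cx.
  by have [M KM] := interior_meets_line x; exact: rho_le_near KM cx.
exact: rho_ge_near.
Qed.

End rho_closed_convex.

Section initial_topology_lemmas.
Context {S : choiceType} {T : topologicalType} (f : S -> T).
Local Notation W := (initial_topology f).

Lemma nbhs_initial (x : S) (N : set S) : nbhs (x : W) N ->
  exists2 O : set T, open_nbhs (f x) O & f @^-1` O `<=` N.
Proof.
rewrite nbhsE => -[_ [[O oO <-] Ox] ON].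
by exists O => //; split.
Qed.

Lemma closed_initialW {U : topologicalType} (h : S -> U) (A : set S) :
  continuous (h : W -> U) -> @closed (initial_topology h) A -> @closed W A.
Proof.
by move=> hc; rewrite -!openC => -[O oO <-]; exact: (continuousP _).1 hc O oO.
Qed.

Lemma preimage_closure_image (A : set S) :
  @closed W A -> f @^-1` closure (f @` A) = A.
Proof.
move=> A_closed; apply/seteqP; split => [s fs | s As]; last first.
  by apply: subset_closure; exists s.
apply: A_closed => N /nbhs_initial [O [oO Ofs] ON].
have [_ [[a Aa <-] Ofa]] := fs O (open_nbhs_nbhs (conj oO Ofs)).
by exists a; split => //; exact: ON.
Qed.

Lemma interior_closure_image (A : set S) (x : S) : dense (range f) ->
  (A : set W)° x -> (closure (f @` A))° (f x).
Proof.
move=> f_dense /nbhs_initial [O [oO Ofx] OA].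
apply: filterS (open_nbhs_nbhs (conj oO Ofx)) => y Oy N Ny.
have [z [[Oz Nz] [s _ fsz]]] : (O `&` N°) `&` range f !=set0.
  by apply: f_dense; [exists y | exact: openI (@open_interior _ N)].
rewrite -fsz in Oz Nz; exists (f s); split; last exact: interior_subset.
by exists s => //; exact: OA.
Qed.

End initial_topology_lemmas.

Section weak_topology.
Context {R : realType} {L S : topologicalLmodType R} (iota : {linear S -> L}).

Lemma dual_pairing_continuous :
  continuous (dual_pairing iota : initial_topology iota -> {ptws tdual L -> R^o}).
Proof.
move=> x; apply: (@cvg_sup _ _ _ _ _ (fmap_filter _ (nbhs_filter x))).2 => phi.
have eval_phi : continuous ((fun g : tdual L -> R^o => g phi) \o
    (dual_pairing iota : initial_topology iota -> _)).
  move=> y; apply: (@continuous_comp (initial_topology iota) L R^o iota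
    (sval phi : L -> R^o)); first exact: initial_continuous.
  exact: (svalP phi).
exact: (@continuous_comp_initial (tdual L -> R^o) (initial_topology iota) R^o
  (fun g => g phi) (dual_pairing iota) eval_phi x).
Qed.

Lemma sigma_closed_initial (A : set S) :
  sigma_closed iota A -> @closed (initial_topology iota) A.
Proof. exact: closed_initialW dual_pairing_continuous. Qed.

Lemma initial_translation_continuous (w : S) :
  continuous ((fun y => y + w) : initial_topology iota -> initial_topology iota).
Proof.
apply: continuous_comp_initial.
have -> : iota \o (fun y => y + w) = (fun z => 1 *: z + iota w) \o iota.
  by apply/funext => y /=; rewrite linearD scale1r.
move=> y; apply: (@continuous_comp (initial_topology iota) L L iota).
  exact: initial_continuous.
exact: scale_add_continuous.
Qed.

Context {A : set S} {S0 : R} {ST : S}.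
Hypotheses (S0_gt0 : 0 < S0) (A_ray : ray_stable ST A).

Lemma interior_of_rho_continuous_at0 : rho A S0 ST 0 \is a fin_num ->
  {for 0, continuous (rho A S0 ST : initial_topology iota -> \bar R)} ->
  (A : set (initial_topology iota))° !=set0.
Proof.
move=> fin0 cont0.
pose c := fine (rho A S0 ST 0) + 1.
have lt0 : (rho A S0 ST 0 < c%:E)%E by rewrite -(fineK fin0) lte_fin /c ltrDl.
pose p := (c / S0) *: ST; exists p.
have : \forall y \near (p : initial_topology iota), (rho A S0 ST (y - p) < c%:E)%E.
  apply: (initial_translation_continuous (- p) p [set y | (rho A S0 ST y < c%:E)%E]).
  by rewrite addrN; exact: cont0 _ (open_ereal_lt' lt0).
apply: filterS => y /rho_lt [m Am]; rewrite lte_fin => mc.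
by have := ray_stable_level S0_gt0 A_ray Am (ltW mc); rewrite subrK.
Qed.

Hypothesis A_sigma : sigma_closed iota A.

Lemma rho_closure_image (s : S) :
  rho (closure (iota @` A)) S0 (iota ST) (iota s) = rho A S0 ST s.
Proof.
by rewrite -rho_preimage preimage_closure_image //; exact: sigma_closed_initial.
Qed.

Lemma rho_closure_image_fin_continuous :
  convex_set (A : set (convex_lmodType S)) -> dense (range iota) ->
  finite_valued (rho A S0 ST) -> (closure (iota @` A))° !=set0 ->
  finite_valued (rho (closure (iota @` A)) S0 (iota ST)) /\
  continuous (rho (closure (iota @` A)) S0 (iota ST)).
Proof.
move=> A_convex iota_dense A_fin K_int; set K := closure (iota @` A) in K_int *.
have fin_range y : range iota y -> rho K S0 (iota ST) y \is a fin_num.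
  by case=> s _ <-; rewrite rho_closure_image.
have K_ray : ray_stable (iota ST) K := closure_ray_stable (image_ray_stable iota A_ray).
have K_convex : convex_set (K : set (convex_lmodType L)) :=
  closure_convex (image_convex iota A_convex).
split; first exact: (rho_fin_num K_convex iota_dense fin_range K_int).
exact: (rho_continuous S0_gt0 K_ray K_convex iota_dense fin_range K_int
  (@closed_closure _ _)).
Qed.

End weak_topology.

Theorem theorem3p1 (R : realType)
    (L S : topologicalLmodType R) (Lplus : set L) (iota : {linear S -> L})
    (A : set S) (S0 : R) (ST : S) :
  positive_cone Lplus ->
  injective iota ->
  dense (range iota) ->
  acceptance_set (iota @^-1` Lplus) A ->
  convex_set (A : set (convex_lmodType S)) ->
  sigma_closed iota A ->
  traded_asset (iota @^-1` Lplus) S0 ST ->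
  finite_valued (rho A S0 ST) ->
  continuous (rho A S0 ST) ->
  let a := exists B : set L,
      [/\ finite_valued (rho B S0 (iota ST)), continuous (rho B S0 (iota ST))
        & forall s, rho B S0 (iota ST) (iota s) = rho A S0 ST s] in
  let b := {for 0, continuous
              (rho A S0 ST : initial_topology iota -> \bar R)} in
  let c := (@interior (initial_topology iota) A) !=set0 in
  let d := interior (closure (iota @` A)) !=set0 in
  [/\ a <-> b, b <-> c, c <-> d
    & a ->
      let ClA := closure (iota @` A) in
      [/\ finite_valued (rho ClA S0 (iota ST)),
          continuous (rho ClA S0 (iota ST)),
          (forall s, rho ClA S0 (iota ST) (iota s) = rho A S0 ST s)
        & forall B : set L,
            finite_valued (rho B S0 (iota ST)) ->
            continuous (rho B S0 (iota ST)) ->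
            (forall s, rho B S0 (iota ST) (iota s) = rho A S0 ST s) ->
            rho B S0 (iota ST) = rho ClA S0 (iota ST)]].
Proof.
move=> [_ _ Lplus_scale _] _ iota_dense accA convA sigmaA [S0_gt0 [ST_pos _]] finA _.
move=> a b c d.
have rayA : ray_stable ST A.
  apply: acceptance_ray_stable accA ST_pos => t x t0.
  by rewrite /= linearZ; exact: Lplus_scale.
have extK := rho_closure_image iota sigmaA.
have d_ext : d -> _ :=
  rho_closure_image_fin_continuous iota S0_gt0 rayA sigmaA convA iota_dense finA.
have ab : a -> b.
  move=> [B [_ B_cont B_ext]]; rewrite /b.
  have -> : rho A S0 ST = rho B S0 (iota ST) \o iota.
    by apply/funext => s /=; rewrite B_ext.
  exact: continuous_comp (@initial_continuous _ _ iota 0) (B_cont _).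
have bc : b -> c := interior_of_rho_continuous_at0 iota S0_gt0 rayA (finA 0).
have cd : c -> d by move=> [x Ax]; exists (iota x); exact: interior_closure_image.
have da : d -> a by move=> /d_ext [K_fin K_cont]; exists (closure (iota @` A)).
split; [tauto | tauto | tauto |].
move=> /ab /bc /cd /d_ext [K_fin K_cont] ClA; split => // B _ B_cont B_ext.
apply: continuous_eq_dense (@ereal_hausdorff R) iota_dense B_cont K_cont _.
by move=> _ [s _ <-]; rewrite B_ext extK.
Qed.
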